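(* Let $t$ be a Pólya tree with $k\ge 2$ nodes, let $w(t)=\ell(t)/k!$, and let $\tilde\rho=1+\epsilon$ be the smallest positive real number satisfying $\int_0^{\tilde\rho} e^{-w(t)v^k}\,dv = 1$ (the dominant singularity of $S_t$). Then \[ \tilde\rho = 1+\epsilon < 1 + \frac{2w(t)}{k}. \]
   Context: A Pólya tree is an unlabeled rooted non-plane tree. For a Pólya tree $t$ with $k$ nodes, $\ell(t)$ is the number of labelings of its nodes by $1,\dots,k$ that increase along every path from the root. $S_t(z)=\ln\frac{1}{1-\int_0^z e^{-w(t)v^k}\,dv}-w(t)z^k$ is the exponential generating function of recursive trees (increasingly labeled rooted non-plane trees) having no fringe subtree of shape $t$; its dominant singularity is the smallest positive solution of the equation above. *)

From Stdlib Require Import Reals Lra Lia List Permutation Arith.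
From Stdlib Require Import ClassicalDescription.
From Coquelicot Require Import Coquelicot.
Import ListNotations.
Open Scope R_scope.

(* Plane rooted trees (rose trees); a Polya tree is such a tree up to
   reordering of children, i.e. up to the relation [iso] below. *)
Inductive tree : Type := Node : list tree -> tree.

Fixpoint tsize (t : tree) : nat :=
  match t with
  | Node ts => S ((fix sz (l : list tree) : nat :=
                     match l with nil => 0%nat | u :: l' => (tsize u + sz l')%nat end) ts)
  end.

Inductive iso : tree -> tree -> Prop :=
| iso_node : forall ts ts' us,
    Forall2 iso ts us -> Permutation us ts' -> iso (Node ts) (Node ts').

(* A recursive tree (increasingly labelled rooted non-plane tree) on the nodes
   0,1,...,k-1 (label i+1 in the paper is node i; node 0 is the root) is
   determined by its parent list [p_1; ...; p_(k-1)] with p_i < i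
   (p_i = parent of node i).  [pars n] enumerates all such lists of length n. *)
Fixpoint pars (n : nat) : list (list nat) :=
  match n with
  | O => [nil]
  | S m => flat_map (fun l => map (fun j => l ++ [j]) (seq 0 (S m))) (pars m)
  end.

Definition children (k : nat) (ps : list nat) (v : nat) : list nat :=
  filter (fun i => Nat.eqb (nth (i - 1) ps 0%nat) v) (seq 1 (k - 1)).

Fixpoint build (k : nat) (ps : list nat) (fuel v : nat) : tree :=
  match fuel with
  | O => Node nil
  | S f => Node (map (build k ps f) (children k ps v))
  end.

Definition shape (k : nat) (ps : list nat) : tree := build k ps k 0%nat.

Definition decP (P : Prop) : bool :=
  if excluded_middle_informative P then true else false.

(* ell(t): number of increasing labellings of t, i.e. number of recursive trees
   on k = |t| nodes whose shape is the Polya tree t *)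
Definition ell (t : tree) : nat :=
  let k := tsize t in
  length (filter (fun ps => decP (iso (shape k ps) t)) (pars (k - 1))).

Definition wt (t : tree) : R := INR (ell t) / INR (fact (tsize t)).

Definition Ft (t : tree) (x : R) : R :=
  RInt (fun v => exp (- (wt t * v ^ tsize t))) 0 x.

Definition is_rho_tilde (t : tree) (rho : R) : Prop :=
  0 < rho /\ Ft t rho = 1 /\ (forall x, 0 < x -> Ft t x = 1 -> rho <= x).

(* Labelling the nodes of [t] in preorder yields a recursive tree of shape [t],
   so ell(t) >= 1, while there are only (k-1)! recursive trees on k nodes; hence
   0 < w <= 1/k.  F(x) = int_0^x exp(-w v^k) dv is continuous and strictly
   increasing with F(0) = 0, so it suffices that F(1 + 2w/k) > 1.  From
   exp(-y) >= 1 - y we get F(x) >= x - w x^(k+1)/(k+1), which exceeds 1 at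
   x = 1 + 2w/k <= 1 + 2/k^2 because (1 + 2/k^2)^(k+1) < 2(k+1)/k for k >= 3
   (for k >= 4 through exp(5/8) < 2).  For k = 2, where w = 1/2, the linear bound
   is too weak and the cubic Taylor bound on exp(-y) is used instead. *)

From Coquelicot Require Import Coquelicot.
From Stdlib Require Import Reals Lra Lia Arith List Permutation ClassicalDescription.
Import ListNotations.
Local Open Scope nat_scope.

Fixpoint tree_ind_forall (P : tree -> Prop)
    (IH : forall ts, Forall P ts -> P (Node ts)) (t : tree) : P t :=
  match t with
  | Node ts => IH ts ((fix forall_ts (l : list tree) : Forall P l :=
      match l with
      | [] => Forall_nil P
      | u :: l' => Forall_cons u (tree_ind_forall P IH u) (forall_ts l')
      end) ts)
  end.

Definition forest_size (ts : list tree) : nat := list_sum (map tsize ts).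

Lemma tsize_Node ts : tsize (Node ts) = S (forest_size ts).
Proof.
  induction ts as [|u ts IH]; [reflexivity|].
  unfold forest_size in *; simpl in *. injection IH as IH. now rewrite IH.
Qed.

Lemma tsize_pos t : 1 <= tsize t.
Proof. destruct t; simpl; lia. Qed.

(* Preorder labelling: [preorder_parents t o] is the parent list of the nodes
   [o + 1, ..., o + tsize t - 1] when [t] is labelled in preorder from its root
   [o]; [forest_parents parents o ts c] does the same for the subtrees [ts] of
   the node [o], labelled from [c] on. *)
Definition forest_parents (parents : tree -> nat -> list nat) (o : nat) :=
  fix forest (ts : list tree) (c : nat) : list nat :=
    match ts with
    | [] => []
    | u :: ts' => o :: parents u c ++ forest ts' (c + tsize u)
    end.

Fixpoint preorder_parents (t : tree) (o : nat) : list nat :=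
  match t with Node ts => forest_parents preorder_parents o ts (S o) end.

Local Notation forest_preorder := (forest_parents preorder_parents).

Fixpoint forest_roots (ts : list tree) (c : nat) : list nat :=
  match ts with
  | [] => []
  | u :: ts' => c :: forest_roots ts' (c + tsize u)
  end.

Lemma forest_preorder_length o ts c :
  (forall u c', In u ts -> length (preorder_parents u c') = tsize u - 1) ->
  length (forest_preorder o ts c) = forest_size ts.
Proof.
  revert c; induction ts as [|u ts IH]; intros c Hlen; [reflexivity|].
  cbn [forest_parents length].
  rewrite length_app, Hlen, IH by (try (intros; apply Hlen); simpl; auto).
  pose proof (tsize_pos u). unfold forest_size; simpl; lia.
Qed.

Lemma preorder_parents_length t o : length (preorder_parents t o) = tsize t - 1.
Proof.
  revert o; induction t as [ts IH] using tree_ind_forall; intro o.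
  rewrite tsize_Node, Nat.sub_1_r; simpl.
  apply forest_preorder_length. intros u c' Hu. exact (proj1 (Forall_forall _ _) IH u Hu c').
Qed.

Lemma forest_preorder_range o ts c : o < c ->
  (forall u c', In u ts -> Forall (fun x => c' <= x < c' + tsize u) (preorder_parents u c')) ->
  Forall (fun x => x = o \/ c <= x < c + forest_size ts) (forest_preorder o ts c).
Proof.
  revert c; induction ts as [|u ts IH]; intros c Hc Hrange; [constructor|].
  cbn [forest_parents]; unfold forest_size; simpl.
  constructor; [now left|]. apply Forall_app; split.
  - eapply Forall_impl; [|apply Hrange; simpl; auto]. simpl; lia.
  - eapply Forall_impl; [|apply IH; [lia|intros; apply Hrange; simpl; auto]].
    unfold forest_size; simpl; lia.
Qed.

Lemma preorder_parents_range t o :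
  Forall (fun x => o <= x < o + tsize t) (preorder_parents t o).
Proof.
  revert o; induction t as [ts IH] using tree_ind_forall; intro o.
  rewrite tsize_Node; simpl.
  eapply Forall_impl; [|apply forest_preorder_range; [lia|]].
  - simpl; lia.
  - intros u c' Hu. exact (proj1 (Forall_forall _ _) IH u Hu c').
Qed.

(* [earlier_parents c l]: the entry of [l] for node [c + 1 + j] is at most [c + j],
   i.e. every node has a smaller parent. *)
Fixpoint earlier_parents (c : nat) (l : list nat) : Prop :=
  match l with
  | [] => True
  | x :: l' => x <= c /\ earlier_parents (S c) l'
  end.

Lemma earlier_parents_app c l1 l2 :
  earlier_parents c (l1 ++ l2) <-> earlier_parents c l1 /\ earlier_parents (c + length l1) l2.
Proof.
  revert c; induction l1 as [|x l1 IH]; intro c; simpl.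
  - rewrite Nat.add_0_r; tauto.
  - rewrite IH, Nat.add_succ_r; tauto.
Qed.

Lemma forest_preorder_earlier o ts c : o <= c ->
  (forall u c', In u ts -> earlier_parents c' (preorder_parents u c')) ->
  earlier_parents c (forest_preorder o ts (S c)).
Proof.
  revert c; induction ts as [|u ts IH]; intros c Hc Hearly; simpl; [exact I|].
  split; [exact Hc|]. apply earlier_parents_app; split; [apply Hearly; simpl; auto|].
  rewrite preorder_parents_length.
  replace (S c + (tsize u - 1)) with (c + tsize u) by (pose proof (tsize_pos u); lia).
  rewrite <- Nat.add_succ_l.
  apply IH; [lia|intros; apply Hearly; simpl; auto].
Qed.

Lemma preorder_parents_earlier t o : earlier_parents o (preorder_parents t o).
Proof.
  revert o; induction t as [ts IH] using tree_ind_forall; intro o; simpl.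
  apply forest_preorder_earlier; [lia|].
  intros u c' Hu. exact (proj1 (Forall_forall _ _) IH u Hu c').
Qed.

Lemma In_pars n l : length l = n -> earlier_parents 0 l -> In l (pars n).
Proof.
  revert l; induction n as [|n IH]; intros l Hl Hearly.
  - destruct l; [now left|discriminate].
  - destruct (exists_last (l := l)) as [l' [a ->]]; [intros ->; discriminate|].
    rewrite length_app in Hl; simpl in Hl.
    apply earlier_parents_app in Hearly as [Hl' [Ha _]].
    cbn [pars]. apply in_flat_map. exists l'. split; [apply IH; auto; lia|].
    apply in_map_iff. exists a. split; [reflexivity|]. apply in_seq. lia.
Qed.

Lemma length_pars n : length (pars n) = fact n.
Proof.
  induction n as [|n IH]; [reflexivity|]. cbn [pars].
  rewrite (flat_map_constant_length (c := S n)), IH; [simpl; lia|].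
  intros l _. now rewrite length_map, length_seq.
Qed.

Fixpoint positions (v : nat) (l : list nat) (c : nat) : list nat :=
  match l with
  | [] => []
  | x :: l' => if Nat.eqb x v then c :: positions v l' (S c) else positions v l' (S c)
  end.

Lemma positions_app v l1 l2 c :
  positions v (l1 ++ l2) c = positions v l1 c ++ positions v l2 (c + length l1).
Proof.
  revert c; induction l1 as [|x l1 IH]; intro c; simpl.
  - now rewrite Nat.add_0_r.
  - rewrite IH, Nat.add_succ_r. now destruct (Nat.eqb x v).
Qed.

Lemma positions_absent v l c : Forall (fun x => x <> v) l -> positions v l c = [].
Proof.
  revert c; induction l as [|x l IH]; intros c Hl; [reflexivity|].
  inversion_clear Hl as [|? ? Hx Hl']. simpl.
  destruct (Nat.eqb_spec x v); [contradiction|auto].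
Qed.

Lemma filter_nth_positions v l c :
  filter (fun i => Nat.eqb (nth (i - c) l 0) v) (seq c (length l)) = positions v l c.
Proof.
  revert c; induction l as [|x l IH]; intro c; [reflexivity|].
  assert (Hshift : filter (fun i => Nat.eqb (nth (i - c) (x :: l) 0) v) (seq (S c) (length l))
                 = filter (fun i => Nat.eqb (nth (i - S c) l 0) v) (seq (S c) (length l))).
  { apply filter_ext_in. intros i Hi. apply in_seq in Hi.
    now replace (i - c) with (S (i - S c)) by lia. }
  cbn [length seq filter positions]. now rewrite Nat.sub_diag, Hshift, IH.
Qed.

Lemma children_positions ps v : children (S (length ps)) ps v = positions v ps 1.
Proof. unfold children. now rewrite Nat.sub_1_r, <- filter_nth_positions. Qed.

Lemma forest_size_cons u ts : forest_size (u :: ts) = tsize u + forest_size ts.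
Proof. reflexivity. Qed.

Lemma positions_forest_roots o ts c :
  o < c -> positions o (forest_preorder o ts c) c = forest_roots ts c.
Proof.
  revert c; induction ts as [|u ts IH]; intros c Hc; [reflexivity|].
  pose proof (tsize_pos u) as Hu.
  cbn [forest_parents positions forest_roots]. rewrite Nat.eqb_refl, positions_app.
  rewrite positions_absent, preorder_parents_length.
  - simpl. replace (S (c + (tsize u - 1))) with (c + tsize u) by lia. rewrite IH; [reflexivity|lia].
  - eapply Forall_impl; [|apply preorder_parents_range]. simpl; lia.
Qed.

Section Embedding.

Variable ps : list nat.

(* [embeds t o]: the nodes [o, o + tsize t) carry a preorder copy of [t] inside
   the parent list [ps], and no node outside this block has its parent in it. *)
Definition embeds (t : tree) (o : nat) : Prop :=
  exists A B, ps = A ++ preorder_parents t o ++ B /\ length A = o /\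
    Forall (fun x => ~ (o <= x < o + tsize t)) (A ++ B).

Definition embeds_forest (o : nat) (ts : list tree) (c : nat) : Prop :=
  exists A B, ps = A ++ forest_preorder o ts c ++ B /\ S (length A) = c /\
    Forall (fun x => ~ (c <= x < c + forest_size ts)) (A ++ B).

Lemma embeds_Node o ts : embeds (Node ts) o -> embeds_forest o ts (S o).
Proof.
  intros (A & B & Hps & HA & Hout). exists A, B.
  repeat split; [exact Hps|lia|].
  eapply Forall_impl; [|exact Hout]. rewrite tsize_Node. simpl; lia.
Qed.

Lemma embeds_forest_cons o u ts c : o < c -> embeds_forest o (u :: ts) c ->
  embeds u c /\ embeds_forest o ts (c + tsize u).
Proof.
  intros Hc (A & B & Hps & HA & Hout).
  rewrite forest_size_cons in Hout. apply Forall_app in Hout as [HoutA HoutB].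
  pose proof (preorder_parents_range u c) as Hu.
  pose proof (forest_preorder_range o ts (c + tsize u)) as Hts.
  pose proof (preorder_parents_length u c) as Hlen. pose proof (tsize_pos u).
  split.
  - exists (A ++ [o]), (forest_preorder o ts (c + tsize u) ++ B).
    split; [rewrite Hps; simpl; now rewrite <- !app_assoc|].
    split; [rewrite length_app; simpl; lia|].
    rewrite !Forall_app; repeat split.
    + eapply Forall_impl; [|exact HoutA]. simpl; lia.
    + constructor; [lia|constructor].
    + eapply Forall_impl; [|apply Hts; [lia|intros; apply preorder_parents_range]].
      simpl; lia.
    + eapply Forall_impl; [|exact HoutB]. simpl; lia.
  - exists (A ++ o :: preorder_parents u c), B.
    split; [rewrite Hps; simpl; now rewrite <- !app_assoc|].
    split; [rewrite length_app; simpl; lia|].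
    rewrite !Forall_app; repeat split.
    + eapply Forall_impl; [|exact HoutA]. simpl; lia.
    + constructor; [lia|]. eapply Forall_impl; [|exact Hu]. simpl; lia.
    + eapply Forall_impl; [|exact HoutB]. simpl; lia.
Qed.

Lemma children_embedded o ts :
  embeds (Node ts) o -> children (S (length ps)) ps o = forest_roots ts (S o).
Proof.
  intros (A & B & Hps & HA & Hout). apply Forall_app in Hout as [HoutA HoutB].
  rewrite children_positions, Hps, !positions_app.
  rewrite (positions_absent o A), (positions_absent o B), app_nil_r.
  - simpl. rewrite HA. apply positions_forest_roots. lia.
  - eapply Forall_impl; [|exact HoutB]. simpl; lia.
  - eapply Forall_impl; [|exact HoutA]. simpl; lia.
Qed.

Lemma build_embedded t : forall o fuel, embeds t o -> tsize t <= fuel ->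
  iso (build (S (length ps)) ps fuel o) t.
Proof.
  induction t as [ts IH] using tree_ind_forall.
  intros o [|f] Hemb Hfuel; rewrite tsize_Node in Hfuel; [lia|].
  cbn [build]. rewrite (children_embedded o ts Hemb).
  apply iso_node with (us := ts); [|apply Permutation_refl].
  assert (Hforest : forall c, o < c -> embeds_forest o ts c -> forest_size ts <= f ->
            Forall2 iso (map (build (S (length ps)) ps f) (forest_roots ts c)) ts).
  { clear Hemb Hfuel. induction IH as [|u ts Hu _ IHts]; intros c Hc Hts Hsize; constructor;
      rewrite forest_size_cons in Hsize; apply embeds_forest_cons in Hts as [Hu' Hts]; auto.
    - apply Hu; [exact Hu'|lia].
    - apply IHts; [lia|exact Hts|lia]. }
  apply Hforest; [lia|apply embeds_Node, Hemb|lia].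
Qed.

End Embedding.

Lemma decP_true (P : Prop) : P -> decP P = true.
Proof. unfold decP. now destruct excluded_middle_informative. Qed.

Lemma ell_pos t : 0 < ell t.
Proof.
  unfold ell. set (ps := preorder_parents t 0).
  assert (Hk : tsize t = S (length ps)).
  { unfold ps. rewrite preorder_parents_length. pose proof (tsize_pos t). lia. }
  assert (Hin : In ps (filter (fun ps => decP (iso (shape (tsize t) ps) t)) (pars (tsize t - 1)))).
  { apply filter_In. split.
    - apply In_pars; [apply preorder_parents_length|apply preorder_parents_earlier].
    - apply decP_true. unfold shape. rewrite Hk. apply build_embedded; [|lia].
      exists [], []. repeat split; [now rewrite app_nil_r|constructor]. }
  destruct (filter _ _); [contradiction|simpl; lia].
Qed.

Lemma ell_le_fact t : ell t <= fact (tsize t - 1).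
Proof. unfold ell. rewrite <- length_pars. apply filter_length_le. Qed.

Local Open Scope R_scope.

Lemma RInt_antiderivative (g G : R -> R) (a b : R) : a <= b ->
  (forall v, continuous g v) -> (forall v, a <= v <= b -> is_derive G v (g v)) ->
  RInt g a b = G b - G a.
Proof.
  intros Hab Hg HG. apply (@is_RInt_unique R_CompleteNormedModule).
  apply (@is_RInt_derive R_CompleteNormedModule); intros v Hv; [|apply Hg].
  apply HG. rewrite Rmin_left, Rmax_right in Hv; lra.
Qed.

Lemma antiderivative_le (g h G H : R -> R) (x : R) : 0 <= x ->
  (forall v, continuous g v) -> (forall v, continuous h v) ->
  (forall v, is_derive G v (g v)) -> (forall v, is_derive H v (h v)) ->
  (forall v, 0 <= v <= x -> g v <= h v) -> G x - G 0 <= H x - H 0.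
Proof.
  intros Hx Hg Hh HG HH Hgh.
  rewrite <- (RInt_antiderivative g G), <- (RInt_antiderivative h H) by auto.
  apply RInt_le; [exact Hx| | |intros v Hv; apply Hgh; lra];
    apply (@ex_RInt_continuous R_CompleteNormedModule); auto.
Qed.

Section LevelCrossing.

Variable f : R -> R.
Hypothesis f_cont : forall x, continuous f x.
Hypothesis f_pos : forall x, 0 < f x.

Lemma ex_RInt_f a b : ex_RInt f a b.
Proof. apply (@ex_RInt_continuous R_CompleteNormedModule). auto. Qed.

Lemma is_derive_RInt_f x : is_derive (fun y => RInt f 0 y) x (f x).
Proof.
  apply (is_derive_RInt f _ 0); [|apply f_cont].
  apply filter_forall. intros. apply (@RInt_correct R_CompleteNormedModule), ex_RInt_f.
Qed.

Lemma RInt_f_lt a b : a < b -> RInt f 0 a < RInt f 0 b.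
Proof.
  intros Hab. rewrite <- (RInt_Chasles f 0 a b) by apply ex_RInt_f.
  pose proof (RInt_gt_0 f a b Hab (fun x _ => f_pos x) (fun x _ => f_cont x)).
  simpl. unfold plus; simpl. lra.
Qed.

Lemma exists_first_level x1 : 0 < x1 -> 1 < RInt f 0 x1 ->
  exists rho, 0 < rho /\ RInt f 0 rho = 1 /\
    (forall x, 0 < x -> RInt f 0 x = 1 -> rho <= x).
Proof.
  intros Hx1 HF.
  destruct (IVT_gen_consistent (fun y => RInt f 0 y) 0 x1 1) as [rho [Hrho Hlevel]].
  - intro x. apply (ex_derive_continuous (V := R_NormedModule)).
    eexists. apply is_derive_RInt_f.
  - rewrite RInt_point. change zero with 0. rewrite Rmin_left, Rmax_right; lra.
  - rewrite Rmin_left, Rmax_right in Hrho by lra.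
    assert (rho <> 0)
      by (intros ->; rewrite RInt_point in Hlevel; change zero with 0 in Hlevel; lra).
    exists rho. repeat split; [lra|exact Hlevel|].
    intros x Hx Hx1'. destruct (Rle_lt_dec rho x) as [|Hlt]; [assumption|].
    pose proof (RInt_f_lt x rho Hlt). lra.
Qed.

Lemma level_lt x1 rho : 1 < RInt f 0 x1 -> RInt f 0 rho = 1 -> rho < x1.
Proof.
  intros HF Hrho. destruct (Rlt_le_dec rho x1) as [|[Hlt | ->]]; [assumption| |lra].
  pose proof (RInt_f_lt x1 rho Hlt). lra.
Qed.

Lemma antiderivative_le_RInt (g G : R -> R) (x : R) : 0 <= x ->
  (forall v, continuous g v) -> (forall v, is_derive G v (g v)) ->
  (forall v, 0 <= v <= x -> g v <= f v) -> G x - G 0 <= RInt f 0 x.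
Proof.
  intros Hx Hg HG Hgf.
  replace (RInt f 0 x) with (RInt f 0 x - RInt f 0 0)
    by (rewrite RInt_point; change zero with 0; ring).
  apply (antiderivative_le g f G (fun y => RInt f 0 y)); auto.
  apply is_derive_RInt_f.
Qed.

End LevelCrossing.

Lemma exp_neg_le_quadratic y : 0 <= y -> exp (- y) <= 1 - y + y ^ 2 / 2.
Proof.
  intros Hy.
  cut (y - y ^ 2 / 2 - (0 - 0 ^ 2 / 2) <= - exp (- y) - - exp (- 0)).
  { rewrite Ropp_0, exp_0. lra. }
  apply (antiderivative_le (fun s => 1 - s) (fun s => exp (- s))
    (fun s => s - s ^ 2 / 2) (fun s => - exp (- s))); [exact Hy| | | | |].
  - intro v. apply (ex_derive_continuous (V := R_NormedModule)). auto_derive; auto.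
  - intro v. apply (ex_derive_continuous (V := R_NormedModule)). auto_derive; auto.
  - intro v. auto_derive; [auto|field].
  - intro v. auto_derive; [auto|field].
  - intros v _. pose proof (exp_ineq1_le (- v)). lra.
Qed.

Lemma exp_neg_ge_cubic y : 0 <= y -> 1 - y + y ^ 2 / 2 - y ^ 3 / 6 <= exp (- y).
Proof.
  intros Hy.
  cut (- exp (- y) - - exp (- 0) <= y - y ^ 2 / 2 + y ^ 3 / 6 - (0 - 0 ^ 2 / 2 + 0 ^ 3 / 6)).
  { rewrite Ropp_0, exp_0. lra. }
  apply (antiderivative_le (fun s => exp (- s)) (fun s => 1 - s + s ^ 2 / 2)
    (fun s => - exp (- s)) (fun s => s - s ^ 2 / 2 + s ^ 3 / 6)); [exact Hy| | | | |].
  - intro v. apply (ex_derive_continuous (V := R_NormedModule)). auto_derive; auto.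
  - intro v. apply (ex_derive_continuous (V := R_NormedModule)). auto_derive; auto.
  - intro v. auto_derive; [auto|field].
  - intro v. auto_derive; [auto|field].
  - intros v Hv. apply exp_neg_le_quadratic. lra.
Qed.

Lemma continuous_exp_neg_pow w k v : continuous (fun v => exp (- (w * v ^ k))) v.
Proof. apply (ex_derive_continuous (V := R_NormedModule)). auto_derive; auto. Qed.

Lemma RInt_exp_neg_half_sqr_gt_1 : 1 < RInt (fun v => exp (- (/ 2 * v ^ 2))) 0 (3 / 2).
Proof.
  eapply Rlt_le_trans; [|apply (antiderivative_le_RInt _ (continuous_exp_neg_pow (/ 2) 2)
    (fun v => 1 - / 2 * v ^ 2 + (/ 2 * v ^ 2) ^ 2 / 2 - (/ 2 * v ^ 2) ^ 3 / 6)
    (fun v => v - v ^ 3 / 6 + v ^ 5 / 40 - v ^ 7 / 336))].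
  - simpl. lra.
  - lra.
  - intro v. apply (ex_derive_continuous (V := R_NormedModule)). auto_derive; auto.
  - intro v. auto_derive; [auto|field].
  - intros v _. apply exp_neg_ge_cubic. pose proof (pow2_ge_0 v). lra.
Qed.

Lemma exp_pow a n : exp a ^ n = exp (INR n * a).
Proof.
  induction n as [|n IH]; [simpl; now rewrite Rmult_0_l, exp_0|].
  cbn [pow]. rewrite IH, <- exp_plus, S_INR. f_equal. ring.
Qed.

Lemma exp_5_8_lt_2 : exp (5 / 8) < 2.
Proof.
  destruct (Rlt_le_dec (exp (5 / 8)) 2) as [|H2]; [assumption|].
  assert (H8 : 2 ^ 8 <= exp (5 / 8) ^ 8) by (apply pow_incr; lra).
  rewrite exp_pow in H8. replace (INR 8 * (5 / 8)) with (INR 5 * 1) in H8 by (simpl; lra).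
  rewrite <- exp_pow in H8.
  assert (exp 1 ^ 5 <= 3 ^ 5) by (apply pow_incr; pose proof (exp_pos 1); pose proof exp_le_3; lra).
  simpl in *. lra.
Qed.

Lemma pow_S_one_add_lt k : (3 <= k)%nat ->
  (1 + 2 / (INR k * INR k)) ^ S k < 2 * (INR k + 1) / INR k.
Proof.
  intros Hk. destruct (Nat.eq_dec k 3) as [->|Hk4]; [simpl; lra|].
  assert (HK : 4 <= INR k) by (replace 4 with (INR 4) by (simpl; lra); apply le_INR; lia).
  set (a := 2 / (INR k * INR k)).
  assert (Ha : 0 <= a) by (apply Rlt_le, Rdiv_lt_0_compat; nra).
  assert (Hexp : (INR k + 1) * a <= 5 / 8).
  { apply Rmult_le_reg_l with (INR k * INR k); [nra|].
    unfold a. replace (INR k * INR k * ((INR k + 1) * (2 / (INR k * INR k))))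
      with (2 * (INR k + 1)) by (field; lra). nra. }
  apply Rle_lt_trans with (exp a ^ S k).
  { apply pow_incr. pose proof (exp_ineq1_le a). lra. }
  rewrite exp_pow, S_INR.
  apply Rle_lt_trans with (exp (5 / 8)).
  { destruct (Rle_lt_or_eq_dec _ _ Hexp) as [Hlt | ->]; [|apply Rle_refl].
    now apply Rlt_le, exp_increasing. }
  apply Rlt_le_trans with 2; [exact exp_5_8_lt_2|].
  apply Rmult_le_reg_l with (INR k); [lra|]. unfold Rdiv. field_simplify; lra.
Qed.

Lemma RInt_exp_neg_pow_gt_1 w k : (3 <= k)%nat -> 0 < w -> w <= / INR k ->
  1 < RInt (fun v => exp (- (w * v ^ k))) 0 (1 + 2 * w / INR k).
Proof.
  intros Hk Hw Hwk.
  assert (HK : 3 <= INR k) by (replace 3 with (INR 3) by (simpl; lra); apply le_INR; lia).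
  set (x1 := 1 + 2 * w / INR k).
  assert (Hx1 : 1 <= x1 <= 1 + 2 / (INR k * INR k)).
  { assert (Hinv : 0 < / INR k) by (apply Rinv_0_lt_compat; lra).
    unfold x1, Rdiv. rewrite Rinv_mult. nra. }
  assert (Hpow : x1 ^ S k / INR (S k) < 2 / INR k).
  { rewrite S_INR. apply (Rmult_lt_reg_r (INR k + 1)); [lra|].
    replace (x1 ^ S k / (INR k + 1) * (INR k + 1)) with (x1 ^ S k) by (field; lra).
    replace (2 / INR k * (INR k + 1)) with (2 * (INR k + 1) / INR k) by (field; lra).
    apply Rle_lt_trans with ((1 + 2 / (INR k * INR k)) ^ S k); [apply pow_incr; lra|].
    now apply pow_S_one_add_lt. }
  assert (Hlin : w * (x1 ^ S k / INR (S k)) < w * (2 / INR k))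
    by (apply Rmult_lt_compat_l; assumption).
  eapply Rlt_le_trans; [|apply (antiderivative_le_RInt _ (continuous_exp_neg_pow w k)
    (fun v => 1 - w * v ^ k) (fun v => v - w * v ^ S k / INR (S k)))].
  - rewrite pow_i by lia. unfold x1 at 1. unfold Rdiv in *. lra.
  - lra.
  - intro v. apply (ex_derive_continuous (V := R_NormedModule)). auto_derive; auto.
  - intro v. auto_derive; [auto|].
    change (match k with 0%nat => 1 | S _ => INR k + 1 end) with (INR (S k)).
    field. apply not_0_INR. lia.
  - intros v _. pose proof (exp_ineq1_le (- (w * v ^ k))). lra.
Qed.

Lemma wt_pos t : 0 < wt t.
Proof. apply Rdiv_lt_0_compat; apply lt_0_INR; [apply ell_pos|apply lt_O_fact]. Qed.

Lemma wt_le_inv_tsize t : wt t <= / INR (tsize t).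
Proof.
  unfold wt. pose proof (ell_le_fact t) as Hell.
  destruct (tsize t) as [|m] eqn:Hk; [pose proof (tsize_pos t); lia|].
  rewrite Nat.sub_1_r in Hell; simpl pred in Hell.
  apply le_INR in Hell.
  assert (Hm : 0 < INR (fact m)) by (apply lt_0_INR, lt_O_fact).
  assert (HS : 0 < INR (S m)) by apply lt_0_INR, Nat.lt_0_succ.
  change (fact (S m)) with (S m * fact m)%nat. rewrite mult_INR.
  apply Rle_trans with (INR (fact m) / (INR (S m) * INR (fact m))).
  - apply Rmult_le_compat_r; [apply Rlt_le, Rinv_0_lt_compat; nra|exact Hell].
  - right. field. lra.
Qed.

Lemma wt_tsize_2 t : tsize t = 2%nat -> wt t = / 2.
Proof.
  intros Hk. pose proof (ell_pos t). pose proof (ell_le_fact t) as Hell.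
  rewrite Hk in Hell. simpl in Hell.
  unfold wt. rewrite Hk. replace (ell t) with 1%nat by lia. simpl. field.
Qed.

Lemma Ft_gt_1 t : (2 <= tsize t)%nat -> 1 < Ft t (1 + 2 * wt t / INR (tsize t)).
Proof.
  intros Hk. unfold Ft. destruct (Nat.eq_dec (tsize t) 2) as [H2|H3].
  - rewrite (wt_tsize_2 t H2), H2.
    replace (1 + 2 * / 2 / INR 2) with (3 / 2) by (simpl; field).
    exact RInt_exp_neg_half_sqr_gt_1.
  - apply RInt_exp_neg_pow_gt_1; [lia|apply wt_pos|apply wt_le_inv_tsize].
Qed.

Theorem lemma2p1 (t : tree) (Hk : (2 <= tsize t)%nat) :
  (exists rho, is_rho_tilde t rho) /\
  (forall rho, is_rho_tilde t rho -> rho < 1 + 2 * wt t / INR (tsize t)).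
Proof.
  set (f := fun v => exp (- (wt t * v ^ tsize t))).
  assert (f_cont : forall v, continuous f v) by apply continuous_exp_neg_pow.
  assert (f_pos : forall v, 0 < f v) by (intro; apply exp_pos).
  pose proof (Ft_gt_1 t Hk) as HF.
  assert (Hx1 : 0 < 1 + 2 * wt t / INR (tsize t)).
  { pose proof (wt_pos t). assert (0 < INR (tsize t)) by (apply lt_0_INR; lia).
    assert (0 < 2 * wt t / INR (tsize t)) by (apply Rdiv_lt_0_compat; lra). lra. }
  split.
  - exact (exists_first_level f f_cont f_pos _ Hx1 HF).
  - intros rho (_ & Hrho & _). exact (level_lt f f_cont f_pos _ _ HF Hrho).
Qed.
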